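(* Let $A$ be an $n\times n$ matrix over $\mathbb{Z}_4+u\mathbb{Z}_4$ such that $A^T=A$. Then the code over $\mathbb{Z}_4+u\mathbb{Z}_4$ generated by the matrix $[I_n\,|\,A]$ is a formally self-dual code of length $2n$.
   Context: $\mathbb{Z}_4+u\mathbb{Z}_4$ is the commutative ring of characteristic $4$ with $u^2=0$. A linear code of length $N$ is a submodule of $(\mathbb{Z}_4+u\mathbb{Z}_4)^N$; its dual is taken with respect to the Euclidean inner product $\sum_i x_iy_i$ in the ring. The Lee weight on $\mathbb{Z}_4+u\mathbb{Z}_4$ is $w_L(a+ub)=w_L(b)+w_L(a+b)$, where the Lee weight on $\mathbb{Z}_4$ is $0,1,2,1$ for $0,1,2,3$, extended additively to vectors. A linear code is formally self-dual if it has the same Lee weight enumerator as its dual. *)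

From HB Require Import structures.
From mathcomp Require Import all_boot all_order all_algebra.
From mathcomp Require Import ring.
Set Implicit Arguments. Unset Strict Implicit. Unset Printing Implicit Defensive.
Import Order.TTheory GRing.Theory Num.Theory.
Local Open Scope ring_scope.

(** Elements a + u b of Z_4 + u Z_4, with a b : 'Z_4. *)
Inductive Z4u : Type := Z4U of 'Z_4 & 'Z_4.

Definition z4u_re (x : Z4u) : 'Z_4 := let: Z4U a _ := x in a.
Definition z4u_im (x : Z4u) : 'Z_4 := let: Z4U _ b := x in b.
Definition z4u_pair (x : Z4u) : 'Z_4 * 'Z_4 := (z4u_re x, z4u_im x).
Definition pair_z4u (p : 'Z_4 * 'Z_4) : Z4u := Z4U p.1 p.2.
Lemma z4u_pairK : cancel z4u_pair pair_z4u. Proof. by case. Qed.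

HB.instance Definition _ := Finite.copy Z4u (can_type z4u_pairK).

Definition z4u_zero := Z4U 0 0.
Definition z4u_one := Z4U 1 0.
Definition z4u_add (x y : Z4u) :=
  Z4U (z4u_re x + z4u_re y) (z4u_im x + z4u_im y).
Definition z4u_opp (x : Z4u) := Z4U (- z4u_re x) (- z4u_im x).
(** (a + u b)(c + u d) = ac + u (ad + bc) since u^2 = 0. *)
Definition z4u_mul (x y : Z4u) :=
  Z4U (z4u_re x * z4u_re y)
      (z4u_re x * z4u_im y + z4u_im x * z4u_re y).

Lemma z4u_addA : associative z4u_add.
Proof. by case=> a b [c d] [e f]; rewrite /z4u_add /= !addrA. Qed.
Lemma z4u_addC : commutative z4u_add.
Proof. by case=> a b [c d]; rewrite /z4u_add /= addrC [b + _]addrC. Qed.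
Lemma z4u_add0 : left_id z4u_zero z4u_add.
Proof. by case=> a b; rewrite /z4u_add /= !add0r. Qed.
Lemma z4u_addN : left_inverse z4u_zero z4u_opp z4u_add.
Proof. by case=> a b; rewrite /z4u_add /= !addNr. Qed.

HB.instance Definition _ :=
  GRing.isZmodule.Build Z4u z4u_addA z4u_addC z4u_add0 z4u_addN.

Lemma z4u_mulA : associative z4u_mul.
Proof. by case=> a b [c d] [e f]; rewrite /z4u_mul /=; congr Z4U; ring. Qed.
Lemma z4u_mulC : commutative z4u_mul.
Proof. by case=> a b [c d]; rewrite /z4u_mul /=; congr Z4U; ring. Qed.
Lemma z4u_mul1 : left_id z4u_one z4u_mul.
Proof. by case=> a b; rewrite /z4u_mul /=; congr Z4U; ring. Qed.
Lemma z4u_mulDl : left_distributive z4u_mul z4u_add.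
Proof. by case=> a b [c d] [e f]; rewrite /z4u_mul /z4u_add /=; congr Z4U; ring. Qed.
Lemma z4u_one_neq0 : z4u_one != z4u_zero. Proof. by []. Qed.

HB.instance Definition _ :=
  GRing.Zmodule_isComNzRing.Build Z4u z4u_mulA z4u_mulC z4u_mul1 z4u_mulDl
    z4u_one_neq0.

Definition leeZ4 (x : 'Z_4) : nat := minn (x : nat) (4 - x)%N.
Definition leeZ4u (x : Z4u) : nat := addn (leeZ4 (z4u_im x)) (leeZ4 (z4u_re x + z4u_im x)).
Definition lee_weight N (v : 'rV[Z4u]_N) : nat := (\sum_(i < N) leeZ4u (v ord0 i))%N.

Definition gen_code k N (G : 'M[Z4u]_(k, N)) : {set 'rV[Z4u]_N} :=
  [set c | [exists x : 'rV[Z4u]_k, c == x *m G]].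

Definition eucl N (x y : 'rV[Z4u]_N) : Z4u := \sum_(i < N) x 0 i * y 0 i.
Definition dual_code N (C : {set 'rV[Z4u]_N}) : {set 'rV[Z4u]_N} :=
  [set y | [forall c in C, eucl c y == 0]].

Definition formally_self_dual N (C : {set 'rV[Z4u]_N}) : Prop :=
  forall w : nat,
    #|[set c in C | lee_weight c == w]| = #|[set c in dual_code C | lee_weight c == w]|.

(* For a generator matrix [I | A] the code is {(x, xA)}, and for symmetric A
   its dual is {(-yA, y)}.  The rotation (a, b) |-> (-b, a) therefore maps the
   code onto its dual, and it preserves Lee weight because w_L(-z) = w_L(z). *)
From mathcomp Require Import all_boot all_order all_algebra.
Set Implicit Arguments. Unset Strict Implicit. Unset Printing Implicit Defensive.
Import GRing.Theory.
Local Open Scope ring_scope.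

Lemma leeZ4uN (x : Z4u) : leeZ4u (- x) = leeZ4u x.
Proof.
by case: x => [[[|[|[|[|//]]]] Ha] [[|[|[|[|//]]]] Hb]]; vm_compute.
Qed.

Lemma lee_weightN N (v : 'rV[Z4u]_N) : lee_weight (- v) = lee_weight v.
Proof. by apply: eq_bigr => i _; rewrite mxE leeZ4uN. Qed.

Lemma lee_weight_row_mx m k (a : 'rV[Z4u]_m) (b : 'rV[Z4u]_k) :
  lee_weight (row_mx a b) = (lee_weight a + lee_weight b)%N.
Proof.
rewrite /lee_weight big_split_ord /=.
by congr addn; apply: eq_bigr => i _; rewrite ?row_mxEl ?row_mxEr.
Qed.

Lemma formally_self_dual_bij N (C : {set 'rV[Z4u]_N}) (f : 'rV_N -> 'rV_N) :
  injective f -> (forall c, lee_weight (f c) = lee_weight c) ->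
  f @: C = dual_code C -> formally_self_dual C.
Proof.
move=> f_inj f_lee fC w; rewrite -fC -(card_imset _ f_inj).
apply: eq_card => y; apply/imsetP/setIdP.
  by case=> c /setIdP [Cc Hw] ->; rewrite f_lee imset_f.
by case=> /imsetP [c Cc ->]; rewrite f_lee => Hw; exists c; rewrite ?inE ?Cc.
Qed.

Lemma eucl_mulmxl k N (x : 'rV[Z4u]_k) (M : 'M[Z4u]_(k, N)) (y : 'rV_N) :
  eucl (x *m M) y = eucl x (y *m M^T).
Proof.
rewrite /eucl; under eq_bigr => i _ do rewrite mxE big_distrl.
rewrite exchange_big; apply: eq_bigr => j _; rewrite mxE big_distrr.
by apply: eq_bigr => i _; rewrite !mxE /= -mulrA [y _ _ * _]mulrC.
Qed.

Lemma mem_dual_gen_code k N (M : 'M[Z4u]_(k, N)) (y : 'rV_N) :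
  (y \in dual_code (gen_code M)) = (y *m M^T == 0).
Proof.
rewrite inE; apply/forallP/eqP => [yM0 | yM0 c].
  apply/rowP => j; have /implyP := yM0 (delta_mx 0 j *m M).
  rewrite inE (_ : [exists x, _]); last by apply/existsP; exists (delta_mx 0 j).
  move=> /(_ isT) /eqP; rewrite eucl_mulmxl /eucl (bigD1 j) //= big1 => [|i ji].
    by rewrite !mxE !eqxx mul1r addr0.
  by rewrite !mxE (negbTE ji) andbF mul0r.
apply/implyP; rewrite inE => /existsP [x /eqP ->].
by rewrite eucl_mulmxl yM0 /eucl big1 // => i _; rewrite mxE mulr0.
Qed.

Section SystematicCode.
Variables (n : nat) (A : 'M[Z4u]_n).
Local Notation G := (row_mx 1%:M A : 'M[Z4u]_(n, n + n)).

Lemma mem_gen_code_systematic c : (c \in gen_code G) = (rsubmx c == lsubmx c *m A).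
Proof.
rewrite inE; apply/existsP/eqP => [[x /eqP ->] | cA].
  by rewrite mul_mx_row mulmx1 row_mxKr row_mxKl.
by exists (lsubmx c); rewrite mul_mx_row mulmx1 -cA hsubmxK.
Qed.

Lemma mem_dual_systematic y :
  (y \in dual_code (gen_code G)) = (lsubmx y == - (rsubmx y *m A^T)).
Proof.
rewrite mem_dual_gen_code -{1}(hsubmxK y) tr_row_mx trmx1 mul_row_col mulmx1.
by rewrite addr_eq0.
Qed.

Definition rot_mx (c : 'rV[Z4u]_(n + n)) := row_mx (- rsubmx c) (lsubmx c).

Lemma rot_mx_inj : injective rot_mx.
Proof.
move=> c1 c2 /eq_row_mx [/oppr_inj r12 l12].
by rewrite -(hsubmxK c1) -(hsubmxK c2) r12 l12.
Qed.

Lemma lee_weight_rot_mx c : lee_weight (rot_mx c) = lee_weight c.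
Proof.
by rewrite lee_weight_row_mx lee_weightN addnC -lee_weight_row_mx hsubmxK.
Qed.

Hypothesis A_sym : A^T = A.

Lemma rot_gen_code : rot_mx @: gen_code G = dual_code (gen_code G).
Proof.
apply/setP => y; rewrite mem_dual_systematic A_sym; apply/imsetP/eqP.
  case=> c; rewrite mem_gen_code_systematic => /eqP cA ->.
  by rewrite /rot_mx row_mxKl row_mxKr cA.
move=> yA; exists (row_mx (rsubmx y) (- lsubmx y)).
  by rewrite mem_gen_code_systematic row_mxKl row_mxKr yA opprK.
by rewrite /rot_mx row_mxKl row_mxKr opprK hsubmxK.
Qed.

End SystematicCode.

Theorem theorem5p1 (n : nat) (A : 'M[Z4u]_n) :
  A^T = A ->
  formally_self_dual (gen_code (row_mx 1%:M A : 'M[Z4u]_(n, n + n))).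
Proof.
move=> A_sym; apply: (formally_self_dual_bij (@rot_mx_inj n)).
  exact: lee_weight_rot_mx.
exact: rot_gen_code.
Qed.
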